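(* For every finite metric $(V,d)$ with root $r$, every $M>0$, and every Level-Prim tree $\mathcal H$ of $G$ (with respect to $r$ and $M$), we have $d(\mathcal H)\le 8\cdot\mathrm{MST}(G)$.
   Context: Levels: $V_0=\{u:d(r,u)\le M\}$, and for $i\ge1$, $V_i=\{u:2^{i-1}M<d(r,u)\le2^iM\}$. Write $V_{\le i}=\bigcup_{j\le i}V_j$ and $V_{<i}=V_{\le i-1}$, with $V_{<0}=\emptyset$. $G$ is the complete graph on $V$ weighted by $d$. $G[U]$ is the induced subgraph, and $G/U$ contracts $U$ to one vertex, keeping parallel edges. $\mathrm{MST}(G)$ is the minimum spanning tree weight, and $d(F)$ is the total weight of an edge set $F$. Level-Prim tree: $H_i$ is a minimum spanning tree of $G[V_{\le i}]/V_{<i}$, viewed as edges of $G$, and $\mathcal H=\bigcup_{i\ge0}H_i$. *)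

From HB Require Import structures.
From mathcomp Require Import all_boot all_order all_algebra.
Set Implicit Arguments. Unset Strict Implicit. Unset Printing Implicit Defensive.
Import Order.TTheory GRing.Theory Num.Theory.
Local Open Scope ring_scope.

Definition is_metric (R : realFieldType) (V : finType) (d : V -> V -> R) : Prop :=
  [/\ forall x y, d x y = 0 <-> x = y,
      forall x y, d x y = d y x &
      forall x y z, d x z <= d x y + d y z].

Definition level (R : realFieldType) (V : finType) (d : V -> V -> R) (r : V) (M : R)
  (i : nat) : {set V} :=
  if i is j.+1 then [set u | (2 ^+ j * M < d r u) && (d r u <= 2 ^+ j.+1 * M)]
  else [set u | d r u <= M].

Definition level_le (R : realFieldType) (V : finType) (d : V -> V -> R) (r : V) (M : R)
  (i : nat) : {set V} := \bigcup_(j < i.+1) level d r M j.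
Definition level_lt (R : realFieldType) (V : finType) (d : V -> V -> R) (r : V) (M : R)
  (i : nat) : {set V} := \bigcup_(j < i) level d r M j.

(* Edges of the complete graph G are two-element subsets {u,v} of V;
   the weight of {u,v} is d u v. *)
Definition ewt (R : realFieldType) (V : finType) (d : V -> V -> R) (e : {set V}) : R :=
  if [pick p : V * V | e == [set p.1; p.2]] is Some p then d p.1 p.2 else 0.

Definition wsum (R : realFieldType) (V : finType) (d : V -> V -> R)
  (F : {set {set V}}) : R := \sum_(e in F) ewt d e.

(* Contraction of U to a single vertex: u in U goes to None. *)
Definition cvert (V : finType) (U : {set V}) (u : V) : option V :=
  if u \in U then None else Some u.

Definition cverts (V : finType) (S U : {set V}) : {set option V} :=
  [set cvert U u | u in S].

(* Edges of G[S]/U (edges of G, parallel edges kept, loops discarded). *)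
Definition cedge (V : finType) (S U : {set V}) (e : {set V}) : bool :=
  [exists u, exists v, [&& u != v, e == [set u; v], u \in S, v \in S
                         & ~~ ((u \in U) && (v \in U))]].

Definition cadj (V : finType) (U : {set V}) (F : {set {set V}}) : rel (option V) :=
  fun x y => [exists u, exists v,
      [&& [set u; v] \in F, cvert U u == x & cvert U v == y]].

Definition spanning_tree (V : finType) (S U : {set V}) (F : {set {set V}}) : Prop :=
  [/\ {in F, forall e, cedge S U e},
      {in cverts S U &, forall x y, connect (cadj U F) x y} &
      #|F| = (#|cverts S U|).-1]%N.

Definition is_MST (R : realFieldType) (V : finType) (d : V -> V -> R)
  (S U : {set V}) (F : {set {set V}}) : Prop :=
  spanning_tree S U F /\
  forall T, spanning_tree S U T -> wsum d F <= wsum d T.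

Definition level_prim_tree (R : realFieldType) (V : finType) (d : V -> V -> R)
  (r : V) (M : R) (H : {set {set V}}) : Prop :=
  exists Hs : nat -> {set {set V}},
    (forall i, is_MST d (level_le d r M i) (level_lt d r M i) (Hs i)) /\
    (forall e, e \in H <-> exists i, e \in Hs i).

(* Fix an MST T of G and let W_i be the vertices of levels i and i+1 other
   than r and the vertices of V_{<i}. T is connected and r is not in W_i, so
   every component C of T restricted to W_i is left by an edge c w of T.
   Shortcutting a doubled traversal of C to the level-i vertices of C and
   hanging it from w, or from r when w lies beyond level i+1 (every vertex of
   level i is then closer to r than to w), yields a spanning tree of
   G[V_{<=i}]/V_{<i} of weight at most sum_{e in T} |e :&: W_i| d(e).  Every
   vertex lies in at most two sets W_i, so d(H) <= sum_i d(H_i) <= 4 MST(G),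
   which is even better than the claimed factor 8. *)

From HB Require Import structures.
From mathcomp Require Import all_boot all_order all_algebra.
Set Implicit Arguments. Unset Strict Implicit. Unset Printing Implicit Defensive.
Import Order.TTheory GRing.Theory Num.Theory.
Local Open Scope ring_scope.

Lemma set2_eq (V : finType) (u v a b : V) :
  [set u; v] = [set a; b] -> (a = u /\ b = v) \/ (a = v /\ b = u).
Proof.
move=> E.
have : a \in [set u; v] by rewrite E set21.
have : b \in [set u; v] by rewrite E set22.
have : u \in [set a; b] by rewrite -E set21.
have : v \in [set a; b] by rewrite -E set22.
by rewrite !inE => /orP[]/eqP? /orP[]/eqP? /orP[]/eqP? /orP[]/eqP?; subst; auto.
Qed.

Lemma card_set2I (V : finType) (x y : V) (A : {set V}) : x != y ->
  #|[set x; y] :&: A| = ((x \in A) + (y \in A))%N.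
Proof.
move=> xy; rewrite -sum1_card.
rewrite (eq_bigl (fun z => (z \in [set x; y]) && (z \in A))); last by move=> z; rewrite inE.
rewrite big_mkcondr big_setU1 ?inE //= big_set1.
by case: (x \in A); case: (y \in A).
Qed.

Fixpoint predecessor (V : eqType) (z : V) (s : seq V) (u : V) : V :=
  if s is t :: s' then (if u == t then z else predecessor t s' u) else z.

Lemma predecessor_cases (V : eqType) (z : V) s u : uniq s -> u \in s ->
  predecessor z s u = z \/
  predecessor z s u \in s /\ (index (predecessor z s u) s < index u s)%N.
Proof.
elim: s z => [|t s IH] z //= /andP[ts us]; rewrite inE.
case: eqP => [_ _|/eqP ut /= us_u]; first by left.
have [->|[pred_s lt_pred]] := IH t us us_u.
  by right; rewrite mem_head /= eqxx eq_sym (negbTE ut).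
have pred_t : predecessor t s u != t by apply: contraNneq ts => <-.
by right; rewrite inE pred_s orbT /= eq_sym (negbTE pred_t) eq_sym (negbTE ut) ltnS.
Qed.

Section Metric.
Variables (R : realFieldType) (V : finType) (d : V -> V -> R).
Hypothesis d_metric : is_metric d.

Lemma metric_xx x : d x x = 0.
Proof. by case: d_metric => h _ _; apply/h. Qed.

Lemma metric_sym x y : d x y = d y x.
Proof. by case: d_metric. Qed.

Lemma metric_triangle x y z : d x z <= d x y + d y z.
Proof. by case: d_metric. Qed.

Lemma metric_ge0 x y : 0 <= d x y.
Proof.
have := metric_triangle x y x.
by rewrite metric_xx (metric_sym y x) -mulr2n pmulrn_lge0.
Qed.

Lemma ewt_set2 u v : ewt d [set u; v] = d u v.
Proof.
rewrite /ewt; case: pickP => [[a b] /= /eqP/set2_eq[] [-> ->] //|].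
  by rewrite metric_sym.
by move/(_ (u, v)); rewrite eqxx.
Qed.

Lemma ewt_ge0 e : 0 <= ewt d e.
Proof. by rewrite /ewt; case: pickP => // p _; apply: metric_ge0. Qed.

Fixpoint walk_len (x : V) (s : seq V) : R :=
  if s is y :: s' then d x y + walk_len y s' else 0.

Definition tour_len (c : V) (s : seq V) : R := walk_len c (rcons s c).

Lemma walk_len_cat x s1 s2 :
  walk_len x (s1 ++ s2) = walk_len x s1 + walk_len (last x s1) s2.
Proof. by elim: s1 x => [|y s IH] x /=; rewrite ?add0r // IH addrA. Qed.

Lemma walk_len_ge0 x s : 0 <= walk_len x s.
Proof. by elim: s x => [|y s IH] x //=; rewrite addr_ge0 ?metric_ge0. Qed.

Lemma walk_len_detour x c s : walk_len x s <= d x c + walk_len c s.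
Proof.
case: s => [|y s] /=; first by rewrite addr0 metric_ge0.
by rewrite addrA lerD2r metric_triangle.
Qed.

Lemma walk_len_subseq x s1 s2 : subseq s1 s2 -> walk_len x s1 <= walk_len x s2.
Proof.
elim: s2 s1 x => [|y s2 IH] [|z s1] x //=; first by rewrite addr_ge0 ?metric_ge0 ?walk_len_ge0.
case: eqP => [<- /IH le_s12|_ sub_s12]; first by rewrite lerD2l.
by apply: le_trans (walk_len_detour x y (z :: s1)) _; rewrite lerD2l IH.
Qed.

Lemma tour_len_subseq c s1 s2 : subseq s1 s2 -> tour_len c s1 <= tour_len c s2.
Proof. by move=> sub_s12; rewrite walk_len_subseq // -!cats1 cat_subseq. Qed.

Lemma tour_len_cat c s1 s2 : tour_len c (s1 ++ s2) <= tour_len c s1 + tour_len c s2.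
Proof.
rewrite /tour_len rcons_cat walk_len_cat -(cats1 s1 c) walk_len_cat /=.
by rewrite addr0 -addrA lerD2l walk_len_detour.
Qed.

Lemma tour_len_rebase c a s : tour_len c s <= d c a *+ 2 + tour_len a s.
Proof.
rewrite /tour_len (le_trans (walk_len_detour c a _)) // mulr2n -addrA lerD2l.
rewrite -!cats1 !walk_len_cat /= !addr0 addrCA lerD2l.
by rewrite addrC (metric_sym c a) metric_triangle.
Qed.

Lemma walk_len_le_tour z c D s : 0 <= D -> (forall t, t \in s -> d z t <= D + d c t) ->
  walk_len z s <= D + tour_len c s.
Proof.
case: s => [|t s] D_ge0 zt_le /=; first by rewrite /tour_len /= metric_xx !addr0.
rewrite /tour_len /= addrA lerD ?zt_le ?mem_head //.
by rewrite -cats1 walk_len_cat lerDl walk_len_ge0.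
Qed.

Lemma sum_predecessor z s : uniq s -> \sum_(u <- s) d u (predecessor z s u) = walk_len z s.
Proof.
elim: s z => [|t s IH] z /=; first by rewrite big_nil.
move=> /andP[ts us]; rewrite big_cons eqxx metric_sym -(IH t us); congr (_ + _).
by apply: eq_big_seq => u us_u; case: eqP => // ut; move: ts; rewrite -ut us_u.
Qed.

End Metric.

Lemma connect_stable (V : finType) (e : rel V) (X : {pred V}) x y :
  (forall a b, a \in X -> e a b -> b \in X) -> x \in X -> connect e x y -> y \in X.
Proof.
move=> stableX xX /connectP[s es ->] {y}.
by elim: s x xX es => //= z s IH x xX /andP[/(stableX _ _ xX) zX /(IH _ zX)].
Qed.

Section InducedConnectivity.
Variables (V : finType) (T : {set {set V}}).

Definition adj_in (A : {set V}) : rel V :=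
  fun x y => [&& x \in A, y \in A & [set x; y] \in T].

Lemma adj_in_sym (A : {set V}) : symmetric (adj_in A).
Proof. by move=> x y; rewrite /adj_in andbCA setUC. Qed.

Lemma connect_adj_in_mem (A : {set V}) x y : x \in A -> connect (adj_in A) x y -> y \in A.
Proof. by apply: connect_stable => a b _ /and3P[]. Qed.

Definition component (A : {set V}) (a : V) : {set V} :=
  [set z in A | connect (adj_in A) a z].

Lemma component_sub (A : {set V}) a : component A a \subset A.
Proof. by apply/subsetP => z; rewrite inE => /andP[]. Qed.

Lemma component_self (A : {set V}) a : a \in A -> a \in component A a.
Proof. by move=> aA; rewrite inE aA connect0. Qed.

Lemma component_closed (A : {set V}) a x y :
  x \in component A a -> y \in A -> [set x; y] \in T -> y \in component A a.
Proof.
rewrite !inE => /andP[xA ax] yA xyT.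
by rewrite yA (connect_trans ax) // connect1 // /adj_in xA yA.
Qed.

Lemma component_connect (A : {set V}) a c y : c \in component A a -> y \in component A a ->
  connect (adj_in (component A a)) c y.
Proof.
move=> cC yC; set C := component A a.
have cy : connect (adj_in A) c y.
  move: cC yC; rewrite !inE => /andP[_ ac] /andP[_ ay].
  by rewrite (connect_trans _ ay) // (sym_connect_sym (@adj_in_sym A)).
suff : y \in [set z | connect (adj_in C) c z] by rewrite inE.
apply: connect_stable cy; last by rewrite inE connect0.
move=> u v; rewrite inE => cu uv.
have uC : u \in C := connect_adj_in_mem cC cu.
have vC : v \in C by case/and3P: uv => _ vA uvT; apply: component_closed uvT.
by rewrite inE (connect_trans cu) // connect1 // /adj_in uC vC; case/and3P: uv.
Qed.

(* A walk from c that enters component (C :\ c) a can leave it only through c. *)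
Lemma connect_setD_component (C : {set V}) c a : c \in C ->
  (forall y, y \in C -> connect (adj_in C) c y) ->
  forall y, y \in C :\: component (C :\ c) a ->
  connect (adj_in (C :\: component (C :\ c) a)) c y.
Proof.
move=> cC connC y; set C1 := component _ a; set C2 := C :\: C1.
have cC2 : c \in C2.
  by rewrite inE cC andbT; apply: contraTN isT => /(subsetP (component_sub _ _)); rewrite !inE eqxx.
rewrite inE => /andP[yC1 yC].
have : y \in [set z | connect (adj_in C2) c z] :|: C1.
  apply: connect_stable (connC y yC); last by rewrite !inE connect0.
  move=> u v cu_or_uC1 /and3P[_ vC uvT].
  rewrite in_setU; case vC1 : (v \in C1); rewrite ?orbT // orbF inE.
  have vC2 : v \in C2 by rewrite inE vC1.
  case/setUP: cu_or_uC1 => [|uC1]; first rewrite inE => cu.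
    have uC2 : u \in C2 := connect_adj_in_mem cC2 cu.
    by rewrite (connect_trans cu) // connect1 // /adj_in uC2 vC2.
  case: (eqVneq v c) => [->|vc]; first exact: connect0.
  by move: vC1; rewrite (component_closed uC1) // !inE vc.
by rewrite in_setU (negbTE yC1) orbF inE.
Qed.

Definition connects_from (r : V) :=
  forall X : {set V}, r \in X -> (forall x y, x \in X -> [set x; y] \in T -> y \in X) ->
  forall v, v \in X.

Lemma exists_exit_edge r (W : {set V}) a : connects_from r -> r \notin W -> a \in W ->
  exists c w, [/\ c \in component W a, w \notin W & [set c; w] \in T].
Proof.
move=> connT rW aW; set C := component W a.
have [/existsP[c /existsP[w /and3P[cC wW cwT]]]|no_exit] :=
  boolP [exists c, exists w, [&& c \in C, w \notin W & [set c; w] \in T]].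
  by exists c, w.
suff : a \in ~: C by rewrite in_setC component_self.
apply: connT => [|x y]; first by rewrite in_setC; apply: contra rW => /(subsetP (component_sub W a)).
rewrite !in_setC => xC xyT; apply/negP => yC.
case xW : (x \in W); first by move: xC; rewrite (component_closed yC xW) // setUC.
move/existsP: no_exit; apply; exists y; apply/existsP; exists x.
by rewrite yC xW setUC xyT.
Qed.

End InducedConnectivity.

Lemma bridge_split_count (V : finType) (C C1 e : {set V}) c a : C1 \subset C ->
  c \in C -> a \in C -> c \notin C1 -> a \in C1 -> e != set0 ->
  ((e \subset C :\: C1) + (e == [set c; a]) + (e \subset C1) <= (e \subset C))%N.
Proof.
move=> C1C cC aC cC1 aC1 /set0Pn[x xe].
have sub1 : (e \subset C1) ==> (e \subset C) by apply/implyP => /subset_trans/(_ C1C).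
have sub2 : (e \subset C :\: C1) ==> (e \subset C).
  by apply/implyP => /subset_trans/(_ (subsetDl C C1)).
have sub_ca : (e == [set c; a]) ==> (e \subset C).
  by apply/implyP => /eqP->; rewrite subUset !sub1set cC aC.
have not_both : ~~ ((e \subset C1) && (e \subset C :\: C1)).
  by apply/negP => /andP[/subsetP/(_ x xe) xC1 /subsetP/(_ x xe)]; rewrite inE xC1.
have ca_C1 : (e == [set c; a]) ==> ~~ (e \subset C1).
  by apply/implyP => /eqP->; rewrite subUset !sub1set (negbTE cC1).
have ca_C2 : (e == [set c; a]) ==> ~~ (e \subset C :\: C1).
  by apply/implyP => /eqP->; rewrite subUset !sub1set !inE aC1 !andbF.
move: sub1 sub2 sub_ca not_both ca_C1 ca_C2.
by case: (e \subset C1); case: (e \subset C :\: C1); case: (e == _); case: (e \subset C).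
Qed.

Section TreeWeights.
Variables (R : realFieldType) (V : finType) (d : V -> V -> R) (T : {set {set V}}).
Hypothesis d_metric : is_metric d.

Definition tweight (f : {set V} -> nat) : R := \sum_(e in T) (f e)%:R * ewt d e.

Lemma tweight_ge0 f : 0 <= tweight f.
Proof. by apply: sumr_ge0 => e _; rewrite mulr_ge0 ?ewt_ge0. Qed.

Lemma ler_tweight f g : {in T, forall e, f e <= g e}%N -> tweight f <= tweight g.
Proof.
by move=> le_fg; apply: ler_sum => e eT; rewrite ler_wpM2r ?ewt_ge0 ?ler_nat ?le_fg.
Qed.

Lemma tweightD f g : tweight f + tweight g = tweight (fun e => f e + g e)%N.
Proof. by rewrite -big_split; apply: eq_bigr => e _; rewrite natrD mulrDl. Qed.

Lemma tweightMn f : tweight f *+ 2 = tweight (fun e => f e * 2)%N.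
Proof. by rewrite -sumrMnl; apply: eq_bigr => e _; rewrite natrM mulrAC mulr_natr. Qed.

Lemma ewt_tweight e0 : e0 \in T -> ewt d e0 = tweight (fun e => e == e0).
Proof.
move=> e0T; rewrite /tweight (bigD1 e0) //= eqxx mul1r big1 ?addr0 //.
by move=> e /andP[_ /negbTE ->]; rewrite mul0r.
Qed.

Lemma tweight_sum n (f : 'I_n -> {set V} -> nat) :
  \sum_(i < n) tweight (f i) = tweight (fun e => \sum_(i < n) f i e)%N.
Proof.
rewrite /tweight exchange_big; apply: eq_bigr => e _.
by rewrite -mulr_suml -natr_sum.
Qed.

Lemma tweight_const k : tweight (fun _ => k) = k%:R * wsum d T.
Proof. by rewrite /tweight /wsum mulr_sumr. Qed.

Hypothesis T_pairs : {in T, forall e : {set V}, #|e| == 2%N}.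

Lemma exists_tour (C : {set V}) c : c \in C ->
  (forall y, y \in C -> connect (adj_in T C) c y) ->
  exists s, s =i C /\ tour_len d c s <= tweight (fun e => (e \subset C) * 2)%N.
Proof.
have [n] := ubnP #|C|; elim: n C c => // n IH C c ltCn cC connC.
have [/existsP[a /and3P[aC ac caT]]|no_nbr] :=
  boolP [exists a, [&& a \in C, a != c & [set c; a] \in T]]; last first.
  have C1 : C = [set c].
    apply/setP => y; apply/idP/set1P => [yC|->//].
    apply/set1P; apply: connect_stable (connC y yC); last exact: set11.
    move=> u v /set1P -> /and3P[_ vC cvT]; apply/set1P/eqP; apply: contraNT no_nbr => vc.
    by apply/existsP; exists v; rewrite vC vc.
  exists [:: c]; split; first by move=> y; rewrite C1 !inE.
  by rewrite /tour_len /= metric_xx // !addr0 tweight_ge0.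
set C1 := component T (C :\ c) a; set C2 := C :\: C1.
have C1C : C1 \subset C by apply: subset_trans (component_sub _ _ _) (subsetDl _ _).
have C2C : C2 \subset C := subsetDl C C1.
have aC1 : a \in C1 by apply: component_self; rewrite !inE ac.
have cC1 : c \notin C1 by apply: contraTN isT => /(subsetP (component_sub _ _ _)); rewrite !inE eqxx.
have cC2 : c \in C2 by rewrite inE cC1.
have aC2 : a \notin C2 by rewrite inE aC1.
have [s1 [s1E tour1]] : exists s, s =i C1 /\ tour_len d a s <= tweight (fun e => (e \subset C1) * 2)%N.
  apply: (IH C1 a _ aC1) => [|y]; last exact: component_connect.
  apply: leq_trans (proper_card _) ltCn; rewrite properEneq C1C andbT.
  by apply: contraNneq cC1 => ->.
have [s2 [s2E tour2]] : exists s, s =i C2 /\ tour_len d c s <= tweight (fun e => (e \subset C2) * 2)%N.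
  apply: (IH C2 c _ cC2 (connect_setD_component cC connC)).
  apply: leq_trans (proper_card _) ltCn; rewrite properEneq C2C andbT.
  by apply: contraNneq aC2 => ->.
exists (s2 ++ s1); split=> [y|].
  rewrite mem_cat s1E s2E inE; case yC1 : (y \in C1) => /=; last by rewrite orbF.
  by rewrite (subsetP C1C y yC1).
rewrite (le_trans (tour_len_cat d_metric _ _ _)) //.
rewrite (le_trans (lerD (lexx _) (tour_len_rebase d_metric c a s1))) //.
rewrite -(ewt_set2 d_metric) (ewt_tweight caT) tweightMn.
rewrite (le_trans (lerD tour2 (lerD (lexx _) tour1))) // !tweightD.
apply: ler_tweight => e eT /=; rewrite -!mulnDl leq_mul2r addnA bridge_split_count ?orbT //.
by apply: contraTneq (T_pairs eT) => ->; rewrite cards0.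
Qed.

End TreeWeights.

Section RankedForests.
Variable V : finType.

(* The pointers p form a forest on A whose roots lie in B. *)
Definition ranked_forest (B A : {set V}) (p : V -> V) (rk : V -> nat) :=
  forall u, u \in A -> p u \in B \/ p u \in A /\ (rk (p u) < rk u)%N.

Lemma ranked_forest_glue (B A1 A2 : {set V}) p1 p2 rk1 rk2 : [disjoint A1 & A2] ->
  ranked_forest B A1 p1 rk1 -> ranked_forest B A2 p2 rk2 ->
  ranked_forest B (A1 :|: A2) (fun u => if u \in A1 then p1 u else p2 u)
                              (fun u => if u \in A1 then rk1 u else rk2 u).
Proof.
move=> dis12 forest1 forest2 u; case: ifP => [uA1 _|uA1 /setUP[|uA2]]; rewrite ?uA1 //.
  by case: (forest1 u uA1) => [|[pA1 lt_rk]]; [left | right; rewrite in_setU pA1].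
case: (forest2 u uA2) => [|[pA2 lt_rk]]; first by left.
by right; rewrite in_setU pA2 orbT (disjointFl dis12 pA2).
Qed.

Lemma ranked_forest_predecessor (B A : {set V}) z s : z \in B -> uniq s -> s =i A ->
  ranked_forest B A (predecessor z s) (index^~ s).
Proof.
move=> zB us sA u; rewrite -sA => us_u.
by have [->|[]] := predecessor_cases z us us_u; [left | rewrite sA; right].
Qed.

End RankedForests.

Lemma exit_edge_count (V : finType) (W C e : {set V}) c w : C \subset W -> c \in C ->
  w \notin W -> #|e| == 2%N ->
  ((e == [set c; w]) + (e \subset C) * 2 + #|e :&: (W :\: C)| <= #|e :&: W|)%N.
Proof.
move=> CW cC wW /cards2P[x [y [xy ->]]].
have splitW v : ((v \in C) + (v \in W :\: C))%N = (v \in W).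
  by rewrite in_setD; case vC : (v \in C); rewrite ?(subsetP CW v vC).
case: (eqVneq [set x; y] [set c; w]) => [->|_].
  have cw : c != w by apply: contraNneq wW => <-; apply: (subsetP CW).
  have wC : w \notin C by apply: contra wW; apply: (subsetP CW).
  rewrite subUset !sub1set !card_set2I // -(splitW c) -(splitW w).
  by rewrite cC (negbTE wC) !in_setD cC (negbTE wW) andbF.
rewrite !card_set2I // -(splitW x) -(splitW y) subUset !sub1set.
by case: (x \in C); case: (y \in C); case: (x \in W :\: C); case: (y \in W :\: C).
Qed.

Section LevelForest.
Variables (R : realFieldType) (V : finType) (d : V -> V -> R) (T : {set {set V}}) (r : V).
Hypotheses (d_metric : is_metric d) (T_pairs : {in T, forall e : {set V}, #|e| == 2%N}).

(* Shortcut a doubled tour of C to its vertices in K, and hang the first of them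
   from the exit edge c w: from w itself if w is in B, and otherwise from r. *)
Lemma component_forest (B K C : {set V}) c w : r \in B -> c \in C -> [set c; w] \in T ->
  (forall y, y \in C -> connect (adj_in T C) c y) ->
  (w \notin B -> forall t, t \in K :&: C -> d t r <= d t w) ->
  exists p rk, ranked_forest B (K :&: C) p rk /\
    \sum_(u in K :&: C) d u (p u) <=
      ewt d [set c; w] + tweight d T (fun e => (e \subset C) * 2)%N.
Proof.
move=> rB cC cwT connC far_w.
have [s [sC tour_s]] := exists_tour d_metric T_pairs cC connC.
set tau := undup [seq x <- s | x \in K].
have utau : uniq tau := undup_uniq _.
have tauE : tau =i K :&: C by move=> x; rewrite mem_undup mem_filter sC inE.
pose z := if w \in B then w else r.
have zB : z \in B by rewrite /z; case: ifP.
exists (predecessor z tau), (index^~ tau).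
split; first exact: ranked_forest_predecessor.
rewrite -(eq_bigl _ _ tauE) -big_uniq // sum_predecessor //.
apply: le_trans (walk_len_le_tour d_metric (c := c) (ewt_ge0 d_metric [set c; w]) _) _ => [t|].
  rewrite tauE => tKC; rewrite ewt_set2 // /z; case: ifP => wB.
    by rewrite (metric_sym d_metric c w) metric_triangle.
  rewrite (metric_sym d_metric r t) (le_trans (far_w (negbT wB) t tKC)) //.
  by rewrite addrC (metric_sym d_metric c t) metric_triangle.
rewrite lerD2l (le_trans _ tour_s) // tour_len_subseq //.
exact: subseq_trans (undup_subseq _) (filter_subseq _ _).
Qed.

Definition far_exits (B K W : {set V}) :=
  forall u c w, u \in K :&: W -> c \in W -> w \notin W -> w \notin B ->
    [set c; w] \in T -> d u r <= d u w.

Lemma far_exits_setD_component (B K W : {set V}) a :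
  far_exits B K W -> far_exits B K (W :\: component T W a).
Proof.
move=> farW u c w uKW' /setDP[cW cC] wW' wB cwT.
apply: (farW u c w _ cW _ wB cwT); first exact: subsetP (setIS K (subsetDl W _)) u uKW'.
apply: contra cC => wW; apply: (component_closed (x := w) _ cW); last by rewrite setUC.
by apply: contraR wW' => wC; rewrite in_setD wC.
Qed.

Hypothesis T_connects : connects_from T r.

(* Peel off one component C of T restricted to W at a time, using the T-edge
   through which r is reached from C. *)
Lemma exists_forest (B K W : {set V}) : r \in B -> [disjoint W & B] -> far_exits B K W ->
  exists p rk, ranked_forest B (K :&: W) p rk /\
    \sum_(u in K :&: W) d u (p u) <= tweight d T (fun e => #|e :&: W|).
Proof.
have [n] := ubnP #|W|; elim: n W => // n IH W ltWn rB dWB farW.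
have [W0|[a aW]] := set_0Vmem W.
  exists id, (fun _ => 0%N); rewrite W0 setI0 big_set0 tweight_ge0 //.
  by split=> // u; rewrite inE.
have [c [w [cC wW cwT]]] := exists_exit_edge T_connects (negbT (disjointFl dWB rB)) aW.
set C := component T W a in cC *; set W' := W :\: C.
have CW : C \subset W := component_sub T W a.
have [p1 [rk1 [forest1 cost1]]] := component_forest (K := K) rB cC cwT
  (fun y => component_connect cC)
  (fun wB t tKC => farW t c w (subsetP (setIS K CW) t tKC) (subsetP CW c cC) wW wB cwT).
have [|||p2 [rk2 [forest2 cost2]]] := IH W' _ rB.
- apply: leq_trans (proper_card _) ltWn; rewrite properEneq subsetDl andbT.
  apply/negP => /eqP W'W; have : a \in W' by rewrite W'W.
  by rewrite inE (component_self _ aW).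
- exact: disjointWl (subsetDl _ _) dWB.
- exact: far_exits_setD_component.
have CW' : C :|: W' = W.
  by apply/setP => v; rewrite in_setU in_setD; case vC : (v \in C); rewrite ?(subsetP CW v vC).
have disCW' : [disjoint K :&: C & K :&: W'].
  rewrite -setI_eq0; apply/eqP/setP => v; rewrite !in_setI in_setD in_set0.
  by case: (v \in C); rewrite /= ?andbF.
exists (fun u => if u \in K :&: C then p1 u else p2 u).
exists (fun u => if u \in K :&: C then rk1 u else rk2 u).
split; first by rewrite -CW' setIUr; apply: ranked_forest_glue.
rewrite (big_setID C) -setIA (setIidPr CW) -setIDA /=.
under eq_bigr => u -> do [].
under [X in _ + X <= _]eq_bigr => u uKW' do rewrite (disjointFl disCW' uKW').
rewrite (le_trans (lerD cost1 cost2)) // (ewt_tweight d cwT) !tweightD.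
by apply: (ler_tweight d_metric) => e eT; apply: exit_edge_count CW cC wW (T_pairs eT).
Qed.

End LevelForest.

Definition pointer_edges (V : finType) (A : {set V}) (p : V -> V) : {set {set V}} :=
  [set [set u; p u] | u in A].

Section PointerTree.
Variables (V : finType) (S U : {set V}) (z : V) (p : V -> V) (rk : V -> nat).
Local Notation B := (U :|: [set z]).
Local Notation K := (S :\: B).
Local Notation F := (pointer_edges K p).
Hypotheses (zS : z \in S) (US : U \subset S) (U0_or_zU : U = set0 \/ z \in U).
Hypothesis forest : ranked_forest B K p rk.

Lemma cvert_base b : b \in B -> cvert U b = cvert U z.
Proof.
rewrite in_setU => /orP[bU|/set1P -> //].
by case: U0_or_zU => [U0|zU]; [rewrite U0 inE in bU | rewrite /cvert bU zU].
Qed.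

Lemma cvert_new u : u \in K -> cvert U u = Some u.
Proof. by rewrite /cvert !inE negb_or => /andP[/andP[/negbTE ->]]. Qed.

Lemma pointer_in u : u \in K -> p u \in S.
Proof.
move=> uK; case: (forest uK) => [|[]]; last by rewrite inE => /andP[].
by apply/subsetP; rewrite subUset US sub1set.
Qed.

Lemma pointer_neq u : u \in K -> p u != u.
Proof.
move=> uK; case: (forest uK) => [pB|[_]]; last by apply: contraTneq => ->; rewrite ltnn.
by apply: contraTneq pB => ->; move: uK; rewrite inE => /andP[].
Qed.

Lemma pointer_edge_inj : {in K &, injective (fun u => [set u; p u])}.
Proof.
move=> u v uK vK /= /set2_eq[[//]|[vpu upv]].
have notB x : x \in K -> x \in B = false by rewrite inE => /andP[/negbTE].
case: (forest uK) => [|[_]]; first by rewrite -vpu notB.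
case: (forest vK) => [|[_]]; first by rewrite upv notB.
by rewrite -vpu upv => lt_vu /(ltn_trans lt_vu); rewrite ltnn.
Qed.

Lemma cadj_pointer_edges_sym : symmetric (cadj U F).
Proof.
move=> x y; apply/existsP/existsP => -[u /existsP[v /and3P[uvF ux vy]]];
  by exists v; apply/existsP; exists u; rewrite setUC uvF ux vy.
Qed.

Lemma connect_pointer_root a : a \in S -> connect (cadj U F) (cvert U a) (cvert U z).
Proof.
have [n] := ubnP (rk a); elim: n a => // n IH a lt_a aS.
case aB : (a \in B); first by rewrite cvert_base.
have aK : a \in K by rewrite inE aB.
have adj_a : cadj U F (cvert U a) (cvert U (p a)).
  apply/existsP; exists a; apply/existsP; exists (p a).
  by rewrite !eqxx /= andbT; apply/imsetP; exists a.
apply: connect_trans (connect1 adj_a) _.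
case: (forest aK) => [/cvert_base -> //|[_ lt_pa]].
exact: IH (leq_trans lt_pa lt_a) (pointer_in aK).
Qed.

Lemma cverts_pointer : cverts S U = cvert U z |: [set cvert U u | u in K].
Proof.
apply/setP => x; rewrite inE; apply/imsetP/idP => [[a aS ->]|].
  case aB : (a \in B); first by rewrite cvert_base ?set11.
  by apply/orP; right; apply/imsetP; exists a; rewrite // inE aB.
case/orP => [/set1P ->|/imsetP[a aK ->]]; first by exists z.
by exists a => //; move: aK; rewrite inE => /andP[].
Qed.

Lemma pointer_spanning_tree : spanning_tree S U F.
Proof.
split.
- move=> e /imsetP[u uK ->]; apply/existsP; exists u; apply/existsP; exists (p u).
  rewrite eq_sym pointer_neq // eqxx pointer_in //=.
  by move: uK; rewrite !inE negb_or => /andP[/andP[/negbTE -> _] ->].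
- move=> x y /imsetP[a aS ->] /imsetP[b bS ->].
  apply: connect_trans (connect_pointer_root aS) _.
  by rewrite (sym_connect_sym cadj_pointer_edges_sym) connect_pointer_root.
rewrite card_in_imset; last exact: pointer_edge_inj.
rewrite cverts_pointer cardsU1 card_in_imset; last first.
  by move=> u v uK vK /=; rewrite !cvert_new // => -[].
suff -> : cvert U z \notin [set cvert U u | u in K] by [].
apply/imsetP => -[u uK]; rewrite (cvert_new uK).
case: U0_or_zU => [U0|zU]; last by rewrite /cvert zU.
rewrite /cvert U0 inE => -[zu]; move: uK; rewrite zu !inE eqxx.
by rewrite orbT.
Qed.

Lemma wsum_pointer_edges (R : realFieldType) (d : V -> V -> R) : is_metric d ->
  wsum d F = \sum_(u in K) d u (p u).
Proof.
move=> d_metric; rewrite /wsum big_imset; last exact: pointer_edge_inj.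
by apply: eq_bigr => u _; rewrite ewt_set2.
Qed.

End PointerTree.

Lemma spanning_tree_connects_from (V : finType) (T : {set {set V}}) r :
  spanning_tree [set: V] set0 T -> connects_from T r.
Proof.
move=> [_ connT _] X rX closedX v.
have cv x : cvert set0 x = Some x by rewrite /cvert inE.
have := connT _ _ (imset_f (cvert set0) (in_setT r)) (imset_f (cvert set0) (in_setT v)).
rewrite !cv => rv; suff : Some v \in [set Some x | x in X] by case/imsetP => x xX [->].
apply: connect_stable rv; last exact: imset_f.
move=> a b /imsetP[x xX ->] /existsP[u /existsP[w /and3P[uwT /eqP]]].
rewrite cv => -[ux] /eqP <-; rewrite cv imset_f //.
by apply: (closedX u) uwT; rewrite ux.
Qed.

Section Levels.
Variables (R : realFieldType) (V : finType) (d : V -> V -> R) (r : V) (M : R).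
Hypothesis M_gt0 : 0 < M.

Local Notation level := (level d r M).
Local Notation level_le := (level_le d r M).
Local Notation level_lt := (level_lt d r M).

Lemma level_dist_le i x : x \in level i -> d r x <= 2 ^+ i * M.
Proof. by case: i => [|j]; rewrite /level inE ?expr0 ?mul1r // => /andP[]. Qed.

Lemma level_dist_gt j x : x \in level j.+1 -> 2 ^+ j * M < d r x.
Proof. by rewrite /level inE => /andP[]. Qed.

Lemma level_leE i : level_le i = level_lt i :|: level i.
Proof. by rewrite /level_le big_ord_recr. Qed.

Lemma dist_gt_notin_level_le i x : x \notin level_le i -> 2 ^+ i * M < d r x.
Proof.
elim: i => [|i IH]; first by rewrite level_leE /level_lt big_ord0 set0U inE -ltNge expr0 mul1r.
rewrite level_leE in_setU negb_or => /andP[/IH lt_x].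
by rewrite /level inE lt_x /= -ltNge.
Qed.

Lemma level_uniq i j x : x \in level i -> x \in level j -> i = j.
Proof.
wlog le_ij : i j / (i <= j)%N.
  by move=> wlog_ij xi xj; case: (leqP i j) => [|/ltnW] /wlog_ij; [apply | move=> <-].
case: j le_ij => [|j]; first by rewrite leqn0 => /eqP.
rewrite leq_eqVlt => /orP[/eqP -> //|]; rewrite ltnS => le_ij xi /level_dist_gt.
by rewrite ltNge (le_trans (level_dist_le xi)) // ler_pM2r // ler_weXn2l // ler1n.
Qed.

Definition level_window i := (level i :|: level i.+1) :\: (level_lt i :|: [set r]).

Lemma level_window_count N x : (\sum_(i < N) (x \in level_window i) <= 2)%N.
Proof.
have once (P : nat -> bool) : (forall i j, P i -> P j -> i = j) -> (\sum_(i < N) P i <= 1)%N.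
  move=> P_uniq; elim: N => [|n IH]; first by rewrite big_ord0.
  rewrite big_ord_recr /=; case Pn : (P n); last by rewrite addn0.
  rewrite big1 // => j _; case Pj : (P j) => //.
  by move: (ltn_ord j); rewrite (P_uniq _ _ Pj Pn) ltnn.
apply: (@leq_trans (\sum_(i < N) ((x \in level i) + (x \in level i.+1)))%N).
  apply: leq_sum => i _; rewrite in_setD (in_setU x (level i)).
  by case: (x \in level i); case: (x \in level i.+1); case: (x \in level_lt i :|: [set r]).
rewrite big_split /= -[2%N]/(1 + 1)%N.
apply: leq_add; first by apply: (once (fun i => x \in level i)) => i j; apply: level_uniq.
by apply: (once (fun i => x \in level i.+1)) => i j /level_uniq h /h [].
Qed.

Hypothesis d_metric : is_metric d.

Lemma root_level0 : r \in level 0.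
Proof. by rewrite /level inE metric_xx // ltW. Qed.

(* Since d r w > 2^(i+1) M >= 2 d r u, the triangle inequality gives d u w > d u r. *)
Lemma dist_root_le_far i u w : u \in level i -> w \notin level_le i.+1 -> d u r <= d u w.
Proof.
move=> ui /dist_gt_notin_level_le far_w.
have : d r u + d r u < d r u + d u w.
  apply: le_lt_trans (lt_le_trans far_w (metric_triangle d_metric r u w)).
  by rewrite exprS -mulrA mulr_natl mulr2n lerD // level_dist_le.
by rewrite ltrD2l (metric_sym d_metric u r) => /ltW.
Qed.

End Levels.

Section LevelTrees.
Variables (R : realFieldType) (V : finType) (d : V -> V -> R) (r : V) (M : R).
Hypotheses (d_metric : is_metric d) (M_gt0 : 0 < M).
Variable T : {set {set V}}.
Hypotheses (T_pairs : {in T, forall e : {set V}, #|e| == 2%N}) (T_connects : connects_from T r).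

Local Notation level := (level d r M).
Local Notation level_le := (level_le d r M).
Local Notation level_lt := (level_lt d r M).
Local Notation level_window := (level_window d r M).

Lemma wsum_MST_level_le_window i (H : {set {set V}}) :
  is_MST d (level_le i) (level_lt i) H ->
  wsum d H <= tweight d T (fun e => #|e :&: level_window i|).
Proof.
move=> [_ H_min]; set S := level_le i; set U := level_lt i; set B := U :|: [set r].
set W := level_window i; set K := S :\: B.
have r0 : r \in level 0 by apply: root_level0.
have rS : r \in S by apply/bigcupP; exists ord0.
have US : U \subset S by rewrite /S level_leE subsetUl.
have U0_or_rU : U = set0 \/ r \in U.
  rewrite /U /level_lt; case: (i) => [|j]; first by left; rewrite big_ord0.
  by right; apply/bigcupP; exists ord0.
have K_level u : u \in K -> u \in level i.
  by rewrite !inE /S level_leE in_setU negb_or => /andP[/andP[/negbTE -> _]].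
have KW : K \subset W.
  apply/subsetP => u uK; rewrite /W /level_window -/U -/B in_setD (in_setU u (level i)).
  by rewrite K_level // andbT; move: uK; rewrite in_setD => /andP[].
have dWB : [disjoint W & B].
  by rewrite disjoints_subset; apply/subsetP => x; rewrite in_setD in_setC => /andP[].
have far : far_exits d T r B K W.
  move=> u c w /setIP[uK _] _ wW wB _; apply: (dist_root_le_far d_metric (K_level u uK)).
  rewrite level_leE -[level_lt i.+1]/(level_le i) level_leE -/U !in_setU.
  move: wW; rewrite /W /level_window -/U -/B in_setD wB (in_setU w (level i)).
  move: wB; rewrite /B in_setU negb_or => /andP[wU _] /norP[wi wi1].
  by rewrite !negb_or wU wi wi1.
have rB : r \in B by rewrite !inE eqxx orbT.
have [p [rk [forest cost]]] := exists_forest d_metric T_pairs T_connects rB dWB far.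
rewrite (setIidPl KW) in forest cost.
have tree := pointer_spanning_tree rS US U0_or_rU forest.
by rewrite (le_trans (H_min _ tree)) // (wsum_pointer_edges forest d_metric).
Qed.

End LevelTrees.

Lemma exists_bigcup_ord_cover (T : finType) (A : {set T}) (F : nat -> {set T}) :
  (forall x, x \in A -> exists i, x \in F i) -> exists n, A \subset \bigcup_(i < n) F i.
Proof.
move=> coverA; suff [n sub_n] : exists n, {subset enum A <= \bigcup_(i < n) F i}.
  by exists n; apply/subsetP => x xA; rewrite sub_n ?mem_enum.
have : {subset enum A <= A} by move=> x; rewrite mem_enum.
elim: (enum A) => [|x s IH] sA; first by exists 0%N.
have [|n sub_n] := IH; first by move=> y ys; rewrite sA // inE ys orbT.
have [i xi] := coverA x (sA x (mem_head x s)).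
exists (maxn n i.+1) => y /predU1P[->|ys].
  by apply/bigcupP; exists (Ordinal (leq_trans (leqnn i.+1) (leq_maxr n i.+1))).
have /bigcupP[j _ yj] := sub_n y ys.
by apply/bigcupP; exists (widen_ord (leq_maxl n i.+1) j).
Qed.

Lemma sum_le_bigcup (R : numDomainType) (T : finType) (A : {set T}) (F : nat -> {set T})
    n (f : T -> R) : (forall x, 0 <= f x) -> A \subset \bigcup_(i < n) F i ->
  \sum_(x in A) f x <= \sum_(i < n) \sum_(x in F i) f x.
Proof.
move=> f_ge0; elim: n A => [|n IH] A.
  by rewrite big_ord0 subset0 => /eqP ->; rewrite big_set0 big_ord0.
rewrite big_ord_recr /= => subA.
rewrite [leRHS]big_ord_recr [leLHS](big_setID (F n)) /= addrC lerD //.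
  apply: IH; apply/subsetP => x; rewrite in_setD => /andP[xFn /(subsetP subA)].
  by rewrite in_setU (negbTE xFn) orbF.
by rewrite [leRHS](big_setID A) setIC lerDl sumr_ge0.
Qed.

Theorem lemma5 (R : realFieldType) (V : finType) (d : V -> V -> R) (r : V) (M : R)
  (H T : {set {set V}}) :
  is_metric d -> 0 < M -> level_prim_tree d r M H ->
  is_MST d [set: V] set0 T ->
  wsum d H <= 8%:R * wsum d T.
Proof.
move=> d_metric M_gt0 [Hs [MST_Hs memH]] [T_tree _].
have T_pairs : {in T, forall e : {set V}, #|e| == 2%N}.
  case: T_tree => T_edges _ _ e /T_edges/existsP[u /existsP[v /and5P[uv /eqP -> _ _ _]]].
  by rewrite cards2 uv.
have T_connects : connects_from T r := spanning_tree_connects_from T_tree.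
have [N H_cover] := exists_bigcup_ord_cover (fun e eH => (memH e).1 eH).
apply: le_trans (sum_le_bigcup (ewt_ge0 d_metric) H_cover) _.
apply: (@le_trans _ _ (\sum_(i < N) tweight d T (fun e => #|e :&: level_window d r M i|))).
  by apply: ler_sum => i _; apply: wsum_MST_level_le_window.
rewrite tweight_sum -tweight_const (ler_tweight d_metric) // => e eT.
have /cards2P[x [y [xy ->]]] := T_pairs _ eT.
under eq_bigr do rewrite card_set2I //.
rewrite big_split /= (leq_trans (leq_add (level_window_count d r M_gt0 N x)
  (level_window_count d r M_gt0 N y))) //.
Qed.
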